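(* For every $n\ge 2$, let $\mathsf D_n=\{x\in\mathbb Z^n:\sum_i x_i\equiv 0\bmod 2\}$ and $t=\lfloor (n-2)/2\rfloor$. Then the set of isomorphism types of the groups $\mathsf D_n/\Lambda'$, where $\Lambda'$ runs through the sublattices of $\mathsf D_n$ generated by $n$ linearly independent minimal vectors of $\mathsf D_n$, is exactly $\{(\mathbb Z/2\mathbb Z)^k: 0\le k\le t\}$.
   Context: Minimal vectors of a lattice are its nonzero vectors of smallest norm $x\cdot x$ (for $\mathsf D_n$ these are the vectors $\pm\varepsilon_i\pm\varepsilon_j$, $i\ne j$). In the paper this set is written $\{1,2,\dots,2^t\}$, where $2^k$ denotes $(\mathbb Z/2\mathbb Z)^k$. *)

From HB Require Import structures.
From mathcomp Require Import all_boot all_order all_algebra.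
Set Implicit Arguments. Unset Strict Implicit. Unset Printing Implicit Defensive.
Import Order.TTheory GRing.Theory Num.Theory.
Local Open Scope ring_scope.

Definition inD (n : nat) (x : 'rV[int]_n) : Prop := ~~ odd (absz (\sum_i x ord0 i)).

Definition norm2 (n : nat) (x : 'rV[int]_n) : int := \sum_i (x ord0 i) ^+ 2.

Definition minimal_vec (n : nat) (x : 'rV[int]_n) : Prop :=
  [/\ inD x, x != 0 & forall y : 'rV[int]_n, inD y -> y != 0 -> norm2 x <= norm2 y].

Definition lin_indep (m n : nat) (M : 'M[int]_(m, n)) : Prop :=
  forall c : 'rV[int]_m, c *m M = 0 -> c = 0.

Definition in_span (m n : nat) (M : 'M[int]_(m, n)) (x : 'rV[int]_n) : Prop :=
  exists c : 'rV[int]_m, x = c *m M.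

(* D_n / <rows of M> is isomorphic to the abelian group G, witnessed (first
   isomorphism theorem) by a surjective group homomorphism D_n -> G whose
   kernel is exactly the sublattice generated by the rows of M. *)
Definition quotient_iso (n : nat) (M : 'M[int]_n) (G : zmodType) : Prop :=
  exists phi : 'rV[int]_n -> G,
    [/\ forall x y, inD x -> inD y -> phi (x + y) = phi x + phi y,
        forall z : G, exists2 x, inD x & phi x = z
      & forall x, inD x -> (phi x = 0 <-> in_span M x)].

Definition elem2 (k : nat) : zmodType := 'rV['F_2]_k.

From HB Require Import structures.
From mathcomp Require Import all_boot all_order all_algebra.
From mathcomp Require Import zify ring.
Import Order.TTheory GRing.Theory Num.Theory.
Local Open Scope ring_scope.
Set Implicit Arguments. Unset Strict Implicit. Unset Printing Implicit Defensive.

(* The minimal vectors of D_n are the roots +-e_a +-e_b.  A lattice L spanned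
   by n independent roots contains 2Z^n: if M u is integral but 2 u_i is not,
   sorting the coordinates u_j by whether they are congruent to u_i, to -u_i,
   or to neither, modulo Z, yields a nonzero integral kernel vector of M.
   Hence D_n/L is the quotient of the even-weight subspace E of F_2^n by the
   reduction R of L, an elementary abelian 2-group of rank
   dim E - dim R = n - 1 - rank R.  The rows of R have at most two nonzero
   entries and no column of R vanishes, so 2 rank R >= n and the quotient
   has rank at most (n - 2)/2.  Conversely, k pairs of roots e_(i+k) -+ e_i together
   with a basis of D on the remaining n - 2k >= 2 coordinates realize
   (Z/2)^k. *)

Local Notation mod2 := (intr : int -> 'F_2).

Definition lift2 (a : 'F_2) : int := Posz (val a).

Lemma lift2K : cancel lift2 mod2.
Proof. by move=> a; rewrite /lift2 -[RHS](natr_Zp a). Qed.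

Lemma mod2_eq0 (z : int) : (mod2 z == 0) = (2 %| z)%Z.
Proof. by rewrite (dvdz_pcharf (pchar_Fp (isT : prime 2))). Qed.

Lemma oppF2 (a : 'F_2) : - a = a.
Proof. exact: oppr_pchar2 (pchar_Fp (isT : prime 2)) a. Qed.

Lemma inD_mod2 n (x : 'rV[int]_n) : inD x = (mod2 (\sum_j x 0 j) == 0).
Proof. by rewrite mod2_eq0 /inD dvdzE dvdn2. Qed.

Lemma map_mx_mod2_eq0 m n (d : 'M[int]_(m, n)) :
  map_mx mod2 d = 0 -> d = map_mx (fun z => (z %/ 2)%Z) d *+ 2.
Proof.
move/matrixP => d_even; apply/matrixP => i j.
by have /eqP := d_even i j; rewrite !mxE mod2_eq0 => /divzK {1}<-; ring.
Qed.

Definition pm1 (s : int) : bool := (s == 1) || (s == -1).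

Definition root_vec n (x : 'rV[int]_n) (a b : 'I_n) (s t : int) :=
  [/\ a != b, pm1 s, pm1 t &
      forall j, x 0 j = (if j == a then s else 0) + (if j == b then t else 0)].

Definition root_rows n (M : 'M[int]_n) :=
  forall l, exists a b s t, root_vec (row l M) a b s t.

Section RootVector.
Variables (n : nat) (x : 'rV[int]_n) (a b : 'I_n) (s t : int).
Hypothesis x_root : root_vec x a b s t.

Lemma root_vec_at : x 0 a = s /\ x 0 b = t.
Proof.
case: x_root => ab _ _ xE; rewrite !xE !eqxx (negbTE ab) eq_sym (negbTE ab).
by rewrite addr0 add0r.
Qed.

Lemma root_vec_out j : j != a -> j != b -> x 0 j = 0.
Proof.
by case: x_root => _ _ _ xE ja jb; rewrite xE (negbTE ja) (negbTE jb) addr0.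
Qed.

Lemma root_vec_dot (R : nzRingType) (w : 'I_n -> R) :
  \sum_j (x 0 j)%:~R * w j = s%:~R * w a + t%:~R * w b.
Proof.
case: x_root => _ _ _ xE.
under eq_bigr do
  rewrite xE intrD mulrDl !(fun_if intr) !(fun_if (fun r => r * _))
          mulr0z mul0r.
by rewrite big_split /= -!big_mkcond /= !big_pred1_eq.
Qed.

Lemma root_vec_pm1 j : x 0 j != 0 -> pm1 (x 0 j).
Proof.
have [xa xb] := root_vec_at; case: x_root => _ s_pm t_pm _.
have [->|ja] := eqVneq j a; first by rewrite xa.
have [->|jb] := eqVneq j b; first by rewrite xb.
by rewrite root_vec_out ?eqxx.
Qed.

Lemma root_vec_norm2 : norm2 x = 2.
Proof.
rewrite /norm2; under eq_bigr do rewrite expr2 -[X in X * _]intz.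
rewrite root_vec_dot !intz; have [-> ->] := root_vec_at.
by case: x_root => _ /orP[]/eqP-> /orP[]/eqP->.
Qed.

Lemma root_vec_inD : inD x.
Proof.
rewrite /inD; under eq_bigr do rewrite -[_ 0 _]mulr1 -[X in X * _]intz.
rewrite root_vec_dot !intz !mulr1.
by case: x_root => _ /orP[]/eqP-> /orP[]/eqP->.
Qed.

End RootVector.

Lemma norm2_le2_root n (x : 'rV[int]_n) :
  inD x -> x != 0 -> norm2 x <= 2 -> exists a b s t, root_vec x a b s t.
Proof.
move=> xD x_nz x_small; have [a xa] : exists a, x 0 a != 0.
  by case/matrix0Pn: x_nz => i [a]; rewrite ord1; exists a.
have normE : norm2 x = x 0 a ^+ 2 + \sum_(j | j != a) x 0 j ^+ 2.
  by rewrite /norm2 (bigD1 a).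
case: (pickP (fun j => (j != a) && (x 0 j != 0))) => [b /andP[ba xb] | only_a].
  rewrite (bigD1 b) //= in normE.
  set r := \sum_(j | _) _ in normE.
  have r_ge0 : 0 <= r by apply: sumr_ge0 => j _; apply: sqr_ge0.
  move: x_small; rewrite normE !expr2 => x_small.
  have r0 : r = 0 by nia.
  exists a, b, (x 0 a), (x 0 b); split; first by rewrite eq_sym.
  - by apply/orP; nia.
  - by apply/orP; nia.
  move=> j; have [->|ja] := eqVneq j a.
    by rewrite eq_sym (negbTE ba) addr0.
  have [->|jb] := eqVneq j b; first by rewrite add0r.
  rewrite addr0; apply/eqP; rewrite -sqrf_eq0; apply/eqP.
  by apply: (psumr_eq0P _ r0) => [i _|]; [apply: sqr_ge0 | rewrite ja jb].
have xj0 j : j != a -> x 0 j = 0.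
  by move=> ja; have := only_a j; rewrite ja /= => /negbFE/eqP.
have sumE : \sum_j x 0 j = x 0 a.
  by rewrite (bigD1 a) //= big1 ?addr0.
have {}normE : norm2 x = x 0 a ^+ 2.
  by rewrite normE big1 ?addr0 // => j /xj0->; rewrite expr0n.
move: xD x_small; rewrite /inD sumE normE expr2 => + x_small.
have : (x 0 a == 1) || (x 0 a == -1) by apply/orP; nia.
by case/orP=> /eqP->.
Qed.

Lemma norm2_ge2 n (y : 'rV[int]_n) : inD y -> y != 0 -> 2 <= norm2 y.
Proof.
move=> yD y_nz; case: (lerP (norm2 y) 2) => [y_small|/ltW//].
by have [a [b [s [t /root_vec_norm2->]]]] := norm2_le2_root yD y_nz y_small.
Qed.

Lemma root_vec_minimal n (x : 'rV[int]_n) a b s t :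
  root_vec x a b s t -> minimal_vec x.
Proof.
move=> x_root; split; first exact: root_vec_inD x_root.
  apply/eqP => x0; have [xa _] := root_vec_at x_root.
  by case: x_root => _ /orP[]/eqP s_pm _ _; move: xa; rewrite x0 mxE s_pm.
by move=> y yD y_nz; rewrite (root_vec_norm2 x_root) norm2_ge2.
Qed.

Lemma minimal_vec_root n (x : 'rV[int]_n) : (2 <= n)%N -> minimal_vec x ->
  exists a b s t, root_vec x a b s t.
Proof.
move=> n_ge2 [xD x_nz x_min]; apply: norm2_le2_root => //.
pose a : 'I_n := Ordinal (ltnW n_ge2); pose b : 'I_n := Ordinal n_ge2.
pose e : 'rV[int]_n :=
  \row_j ((if j == a then 1 else 0) + (if j == b then 1 else 0)).
have e_root : root_vec e a b 1 1 by split => // j; rewrite mxE.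
rewrite -(root_vec_norm2 e_root) x_min //; first exact: root_vec_inD e_root.
by have [] := root_vec_minimal e_root.
Qed.

Lemma lin_indep_det n (M : 'M[int]_n) : lin_indep M -> \det M != 0.
Proof. by move=> M_indep; apply/negP => /det0P[v /eqP v_nz /M_indep]. Qed.

Lemma det_neq0_mulmx_eq0 n (M : 'M[int]_n) (v : 'cV[int]_n) :
  \det M != 0 -> M *m v = 0 -> v = 0.
Proof.
move=> M_det Mv; apply/eqP/negPn/negP => v_nz; case/negP: M_det.
rewrite -det_tr; apply/det0P; exists v^T; first by rewrite trmx_eq0.
by rewrite -trmx_mul Mv trmx0.
Qed.

Section ResidueSign.
Variable g : rat.
Hypothesis g2 : 2 * g \isn't a Num.int.

Definition residue_sign (y : rat) : int :=
  if y - g \is a Num.int then 1 else if y + g \is a Num.int then -1 else 0.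

Lemma residue_signDint y m :
  m \is a Num.int -> residue_sign (y + m) = residue_sign y.
Proof.
move=> m_int; rewrite /residue_sign.
by rewrite addrAC (rpredDr _ m_int) addrAC (rpredDr _ m_int).
Qed.

Lemma residue_signN y : residue_sign (- y) = - residue_sign y.
Proof.
rewrite /residue_sign -opprD rpredN -[- y + g]opprK opprD opprK rpredN.
case yg1: (y - g \is a Num.int); case yg2: (y + g \is a Num.int) => //.
case/negP: g2; rewrite (_ : 2 * g = (y + g) - (y - g)); last by ring.
exact: rpredB.
Qed.

Lemma residue_sign_sum_int y z :
  y + z \is a Num.int -> residue_sign z = - residue_sign y.
Proof.
by move=> yz_int; rewrite -residue_signN -(residue_signDint (- y) yz_int) addKr.
Qed.

Lemma residue_sign_pm1 (s : int) y :
  pm1 s -> residue_sign (s%:~R * y) = s * residue_sign y.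
Proof.
case/orP => /eqP ->; first by rewrite mulr1z !mul1r.
by rewrite mulrN1z mulN1r mulNr mul1r residue_signN.
Qed.

Lemma residue_sign_self : residue_sign g = 1.
Proof. by rewrite /residue_sign subrr rpred0. Qed.

End ResidueSign.

Lemma root_vec_row_dot m n (M : 'M[int]_(m, n)) l a b s t
    (R : nzRingType) (w : 'I_n -> R) : root_vec (row l M) a b s t ->
  \sum_j (M l j)%:~R * w j = s%:~R * w a + t%:~R * w b.
Proof.
move=> l_root; rewrite -(root_vec_dot l_root w).
by apply: eq_bigr => j _; rewrite mxE.
Qed.

Lemma card_bigcup_le (T : finType) r (S : 'I_r -> {set T}) :
  (#|\bigcup_(i < r) S i| <= \sum_(i < r) #|S i|)%N.
Proof.
elim/big_rec2: _ => [|i k U _ le_Uk]; first by rewrite cards0.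
by rewrite (leq_trans (leq_card_setU _ _).1) ?leq_add2l.
Qed.

Lemma rank_ge_half_cols (F : fieldType) m n (A : 'M[F]_(m, n)) :
  (forall i, #|[set j | A i j != 0%R]| <= 2)%N ->
  (forall j, exists i, A i j != 0) ->
  (n <= 2 * \rank A)%N.
Proof.
move=> row_supp col_nz; pose f := maxrankfun A.
have cover : [set: 'I_n] \subset \bigcup_(i < \rank A) [set j | A (f i) j != 0].
  apply/subsetP => j _; apply/bigcupP.
  case: (pickP (fun i => A (f i) j != 0)) => [i Aij | col0].
    by exists i; rewrite ?inE.
  have [i0 Ai0j] := col_nz j; case/eqP: Ai0j.
  have /submxP[c rowE] : (row i0 A <= rowsub f A)%MS.
    by rewrite eq_maxrowsub row_sub.
  move/rowP/(_ j): rowE; rewrite !mxE => ->.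
  by rewrite big1 // => k _; rewrite mxE (eqP (negbFE (col0 k))) mulr0.
rewrite -[X in (X <= _)%N]card_ord -cardsT.
rewrite (leq_trans (subset_leq_card cover)) //.
rewrite (leq_trans (card_bigcup_le _)) // mulnC -[X in (_ <= X * _)%N]card_ord.
by rewrite -sum_nat_const leq_sum.
Qed.

Definition even_space n : 'M['F_2]_n := kermx (const_mx 1 : 'cV['F_2]_n).

Lemma even_spaceE n (y : 'rV['F_2]_n) :
  (y <= even_space n)%MS = (\sum_j y 0 j == 0).
Proof.
rewrite sub_kermx [y *m _]mx11_scalar -scalemx1 scalemx_eq0.
rewrite (negbTE (matrix_nonzero1 _ 0)) orbF mxE.
by under eq_bigr do rewrite mxE mulr1.
Qed.

Lemma inD_even_space n (x : 'rV[int]_n) :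
  inD x = (map_mx mod2 x <= even_space n)%MS.
Proof.
rewrite inD_mod2 even_spaceE rmorph_sum.
by congr (_ == 0); apply: eq_bigr => j _; rewrite mxE.
Qed.

Lemma even_space_single_eq0 n (w : 'rV['F_2]_n) j0 : (w <= even_space n)%MS ->
  (forall j, j != j0 -> w 0 j = 0) -> w = 0.
Proof.
move=> wE w_out; have : \sum_j w 0 j = w 0 j0.
  by rewrite (bigD1 j0) //= big1 ?addr0.
move: wE; rewrite even_spaceE => /eqP-> /esym wj0.
by apply/rowP => j; rewrite mxE; have [->|/w_out] := eqVneq j j0.
Qed.

Lemma rank_even_space n : \rank (even_space n) = n.-1.
Proof.
rewrite mxrank_ker; case: n => [|n] //.
suff -> : \rank (const_mx 1 : 'cV['F_2]_n.+1) = 1%N by rewrite subn1.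
apply/eqP; rewrite eqn_leq rank_leq_col lt0n mxrank_eq0.
by apply/eqP => /matrixP/(_ 0 0); rewrite !mxE => /eqP; rewrite oner_eq0.
Qed.

Section RootLattice.
Variables (n : nat) (M : 'M[int]_n).
Hypotheses (M_roots : root_rows M) (M_det : \det M != 0).

(* Each entry of [M u] is some [s u_a + t u_b] with [s, t = +-1]; when it is
   an integer, [s v_a + t v_b = 0] for [v_j := residue_sign (u_i) (u_j)]. *)
Lemma root_rows_half_int (u : 'cV[rat]_n) :
  (forall l, (map_mx intr M *m u) l 0 \is a Num.int) ->
  forall i, 2 * u i 0 \is a Num.int.
Proof.
move=> Mu_int i; apply/negPn/negP => ui2.
pose v : 'cV[int]_n := \col_j residue_sign (u i 0) (u j 0).
suff /(det_neq0_mulmx_eq0 M_det)/colP/(_ i) : M *m v = 0.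
  by rewrite !mxE residue_sign_self.
apply/colP => l; rewrite !mxE.
have [a [b [s [t l_root]]]] := M_roots l; case: (l_root) => _ s_pm t_pm _.
under eq_bigr do rewrite -[M l _]intz.
rewrite (root_vec_row_dot _ l_root) !intz !mxE -!residue_sign_pm1 //.
rewrite (residue_sign_sum_int ui2 (y := s%:~R * u a 0) (z := t%:~R * u b 0)).
  by rewrite addrN.
have := Mu_int l; rewrite mxE; under eq_bigr do rewrite mxE.
by rewrite (root_vec_row_dot _ l_root).
Qed.

Lemma root_rows_dvd2 : exists B : 'M[int]_n, B *m M = 2%:M.
Proof.
have M_unit : map_mx (intr : int -> rat) M \in unitmx.
  by rewrite unitmxE unitfE det_map_mx intr_eq0.
pose N := invmx (map_mx (intr : int -> rat) M).
have N2_int i j : 2 * N i j \is a Num.int.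
  have := root_rows_half_int (u := col j N) _ i; rewrite mxE; apply => l.
  rewrite colE mulmxA mulmxV // -colE !mxE.
  by case: (l == j); rewrite ?rpred1 ?rpred0.
pose B := \matrix_(i, j) Num.floor (2 * N i j); exists B.
have BE : map_mx intr B = 2 *: N by apply/matrixP => i j; rewrite !mxE floorK.
have : map_mx (intr : int -> rat) (B *m M) = map_mx intr 2%:M.
  rewrite map_mxM BE -scalemxAl mulVmx //.
  by rewrite map_scalar_mx scale_scalar_mx mulr1.
move/matrixP => BM_rat; apply/matrixP => i j; apply: (@intr_inj rat).
by have := BM_rat i j; rewrite !mxE.
Qed.

Lemma in_span_double x : in_span M (x *+ 2).
Proof.
have [B BM] := root_rows_dvd2.
by exists (x *m B); rewrite -mulmxA BM mul_mx_scalar scaler_nat.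
Qed.

Lemma in_span_mod2E x :
  in_span M x <-> (map_mx mod2 x <= map_mx mod2 M)%MS.
Proof.
split=> [[c ->]|]; first by rewrite map_mxM submxMl.
case/submxP => c2 xE; pose c := map_mx lift2 c2.
have c2E : map_mx mod2 c = c2 by apply/matrixP => i j; rewrite !mxE lift2K.
have /map_mx_mod2_eq0 d_even : map_mx mod2 (x - c *m M) = 0.
  by rewrite map_mxB map_mxM c2E xE subrr.
have [c' c'E] := in_span_double (map_mx (fun z => (z %/ 2)%Z) (x - c *m M)).
by exists (c + c'); rewrite mulmxDl -c'E -d_even addrC subrK.
Qed.

Lemma quotient_iso_mod2 (G : zmodType) (psi : 'rV['F_2]_n -> G) :
  {morph psi : y z / y + z} ->
  (forall z, exists2 y, (y <= even_space n)%MS & psi y = z) ->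
  (forall y, (y <= even_space n)%MS -> psi y = 0 <-> (y <= map_mx mod2 M)%MS) ->
  quotient_iso M G.
Proof.
move=> psiD psi_onto psi_ker; exists (fun x => psi (map_mx mod2 x)); split.
- by move=> x y _ _; rewrite map_mxD psiD.
- move=> z; have [y yE <-] := psi_onto z.
  have liftK : map_mx mod2 (map_mx lift2 y) = y.
    by apply/matrixP => i j; rewrite !mxE lift2K.
  by exists (map_mx lift2 y); rewrite ?inD_even_space liftK.
- by move=> x; rewrite in_span_mod2E inD_even_space; apply: psi_ker.
Qed.

Lemma mod2_root_rows_sub : (map_mx mod2 M <= even_space n)%MS.
Proof.
apply/row_subP => l; rewrite -map_row -inD_even_space.
by have [a [b [s [t /root_vec_inD]]]] := M_roots l.
Qed.

Lemma rank_mod2_root_rows : (n <= 2 * \rank (map_mx mod2 M))%N.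
Proof.
apply: rank_ge_half_cols => [l | j].
  have [a [b [s [t l_root]]]] := M_roots l.
  apply: leq_trans (_ : #|[set a; b]| <= 2)%N.
    apply/subset_leq_card/subsetP => j; rewrite !inE mxE; apply: contraR.
    rewrite negb_or => /andP[ja jb].
    by have := root_vec_out l_root ja jb; rewrite mxE => ->.
  by rewrite cards2; case: (a != b).
case: (pickP (fun l => M l j != 0)) => [l Mlj | col0].
  have [a [b [s [t l_root]]]] := M_roots l.
  exists l; rewrite mxE mod2_eq0.
  have := root_vec_pm1 l_root (j := j); rewrite !mxE => /(_ Mlj).
  by case/orP=> /eqP->.
have col_j0 : M *m delta_mx j (0 : 'I_1) = 0.
  by apply/colP => l; rewrite -colE !mxE (eqP (negbFE (col0 l))).
move/colP/(_ j): (det_neq0_mulmx_eq0 M_det col_j0).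
by rewrite !mxE !eqxx => /eqP; rewrite oner_eq0.
Qed.

Lemma rank_even_diff_le :
  (\rank (even_space n :\: map_mx mod2 M) <= (n - 2)./2)%N.
Proof.
have capE : \rank (even_space n :&: map_mx mod2 M) = \rank (map_mx mod2 M).
  by apply/eqmx_rank/eqmxP; exact: capmx_idPr mod2_root_rows_sub.
have := mxrank_cap_compl (even_space n) (map_mx mod2 M).
rewrite capE rank_even_space geq_half_double => rankE.
by have := rank_mod2_root_rows; lia.
Qed.

Lemma root_rows_quotient :
  quotient_iso M (elem2 (\rank (even_space n :\: map_mx mod2 M))).
Proof.
set E := even_space n; set R := map_mx mod2 M; set C := (E :\: R)%MS.
have CR0 : (C :&: R = 0)%MS by apply: capmx_diff.
have E_CR : (E <= C + R)%MS.
  by rewrite -{1}(addsmx_diff_cap_eq E R) addsmxS ?capmxSr.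
pose coord (y : 'rV_n) := y *m proj_mx C R *m pinvmx (row_base C).
have coordK y : coord y *m row_base C = y *m proj_mx C R.
  by rewrite mulmxKpV // eq_row_base proj_mx_sub.
apply: (quotient_iso_mod2 (psi := coord)) => [y z | z | y yE].
- by rewrite /coord !mulmxDl.
- have zC : (z *m row_base C <= C)%MS by rewrite -(eq_row_base C) submxMl.
  exists (z *m row_base C); first exact: submx_trans zC (diffmxSl E R).
  by apply: (row_free_inj (row_base_free C)); rewrite coordK proj_mx_id.
- split=> [coord0 | yR]; last by rewrite /coord proj_mx_0 ?mul0mx.
  have := proj_mx_compl_sub (submx_trans yE E_CR).
  by rewrite -coordK coord0 mul0mx subr0.
Qed.

End RootLattice.

Section PairedRoots.
Variables (m k : nat).
Hypothesis k_small : (k.*2.+2 <= m.+1)%N.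
Local Notation N := m.+1.

Definition partner (i : nat) : nat :=
  if (i < k)%N then (i + k)%N else if (i < k.*2)%N then (i - k)%N
  else if i == k.*2 then k.*2.+1 else k.*2.

Definition partner_sign (i : nat) : int :=
  if (i < k)%N || (i == k.*2) then -1 else 1.

(* Row [i] is [e_(partner i) + partner_sign i * e_i], i.e. the rows are
   [e_(i+k) - e_i] and [e_i + e_(i+k)] for [i < k], then [e_(2k+1) - e_(2k)]
   and [e_(2k) + e_j] for [j > 2k]. *)
Definition paired_root_mx : 'M[int]_N :=
  \matrix_(i, j) ((if (j : nat) == partner i then 1 else 0) +
                  (if j == i then partner_sign i else 0)).

Lemma eq_inord (i : 'I_N) p : (p < N)%N -> (i == inord p) = (nat_of_ord i == p).
Proof. by move=> p_lt; rewrite -val_eqE /= inordK. Qed.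

Lemma partner_lt (i : 'I_N) : (partner i < N)%N.
Proof. by have := ltn_ord i; rewrite /partner; repeat case: ifP => ?; lia. Qed.

Lemma partner_neq i : partner i != i.
Proof. by rewrite /partner; repeat case: ifP => ?; lia. Qed.

Lemma paired_root_mx_row i :
  root_vec (row i paired_root_mx) (inord (partner i)) i 1 (partner_sign i).
Proof.
split.
- apply/eqP => /(congr1 val)/=; rewrite inordK ?partner_lt //.
  by apply/eqP/partner_neq.
- by [].
- by rewrite /pm1 /partner_sign; case: ifP.
- by move=> j; rewrite !mxE eq_inord ?partner_lt.
Qed.

Lemma paired_root_rows : root_rows paired_root_mx.
Proof. by move=> i; do 4!eexists; apply: paired_root_mx_row. Qed.

Section Columns.
Variables (R : nzRingType) (c : 'rV[R]_N).
Local Notation A := (map_mx intr paired_root_mx).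

Lemma mulmx_paired_root (j : 'I_N) :
  (c *m A) 0 j =
    (partner_sign j)%:~R * c 0 j + \sum_(i : 'I_N | partner i == j) c 0 i.
Proof.
rewrite mxE; under eq_bigr do rewrite !mxE intrD mulrDr.
rewrite big_split /= addrC; congr (_ + _).
  rewrite (bigD1 j) //= eqxx big1 ?addr0 => [|i ij].
    by rewrite mulrzr mulrzl.
  by rewrite eq_sym (negbTE ij) mulr0z mulr0.
rewrite (bigID (fun i : 'I_N => partner i == j)) /= [X in _ + X]big1 ?addr0.
  by apply: eq_bigr => i /eqP<-; rewrite eqxx mulr1.
by move=> i /negbTE ij; rewrite eq_sym ij mulr0z mulr0.
Qed.

Lemma sum_partner_pred1 (j p : nat) : (p < N)%N ->
  (forall i : 'I_N, (partner i == j) = (nat_of_ord i == p)) ->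
  \sum_(i : 'I_N | partner i == j) c 0 i = c 0 (inord p).
Proof.
move=> p_lt partnerE; rewrite (eq_bigl (pred1 (inord p))) ?big_pred1_eq // => i.
by rewrite partnerE /= eq_inord.
Qed.

Lemma paired_col_lt j : (j < k)%N ->
  (c *m A) 0 (inord j) = - c 0 (inord j) + c 0 (inord (j + k)).
Proof.
move=> j_lt; rewrite mulmx_paired_root inordK; last by lia.
rewrite /partner_sign j_lt mulrN1z mulN1r (@sum_partner_pred1 _ (j + k)) //.
  by lia.
by move=> i; apply/eqP/eqP; rewrite /partner; repeat case: ifP => ?; lia.
Qed.

Lemma paired_col_mid j : (k <= j < k.*2)%N ->
  (c *m A) 0 (inord j) = c 0 (inord j) + c 0 (inord (j - k)).
Proof.
move=> j_mid; rewrite mulmx_paired_root inordK; last by lia.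
rewrite /partner_sign ifF; last by lia.
rewrite mul1r (@sum_partner_pred1 _ (j - k)) //.
  by lia.
by move=> i; apply/eqP/eqP; rewrite /partner; repeat case: ifP => ?; lia.
Qed.

Lemma paired_col_2k1 :
  (c *m A) 0 (inord k.*2.+1) = c 0 (inord k.*2.+1) + c 0 (inord k.*2).
Proof.
rewrite mulmx_paired_root inordK; last by lia.
rewrite /partner_sign ifF; last by lia.
rewrite mul1r (@sum_partner_pred1 _ k.*2) //.
  by lia.
by move=> i; apply/eqP/eqP; rewrite /partner; repeat case: ifP => ?; lia.
Qed.

Lemma paired_col_gt (j : 'I_N) : (k.*2.+1 < j)%N -> (c *m A) 0 j = c 0 j.
Proof.
move=> j_gt; rewrite mulmx_paired_root /partner_sign ifF; last by lia.
rewrite mul1r big_pred0 ?addr0 // => i.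
by apply/negbTE/eqP; rewrite /partner; repeat case: ifP => ?; lia.
Qed.

Lemma paired_col_2k :
  (c *m A) 0 (inord k.*2) =
    - c 0 (inord k.*2) + \sum_(i : 'I_N | (k.*2 < i)%N) c 0 i.
Proof.
rewrite mulmx_paired_root inordK; last by lia.
rewrite /partner_sign eqxx orbT mulrN1z mulN1r; congr (_ + _).
apply: eq_bigl => i.
by apply/eqP/idP; rewrite /partner; repeat case: ifP => ?; lia.
Qed.

End Columns.

Lemma map_mx_intz p q (B : 'M[int]_(p, q)) : map_mx intr B = B.
Proof. by apply/matrixP => i j; rewrite mxE intz. Qed.

Lemma paired_root_mx_indep : lin_indep paired_root_mx.
Proof.
move=> c cM0; have col j : (c *m map_mx intr paired_root_mx) 0 j = 0.
  by rewrite map_mx_intz cM0 mxE.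
have c_gt (i : 'I_N) : (k.*2.+1 < i)%N -> c 0 i = 0.
  by move=> i_gt; rewrite -(paired_col_gt c i_gt) col.
have c_pair p : (p < k)%N -> c 0 (inord p) = 0 /\ c 0 (inord (p + k)) = 0.
  move=> p_lt; have := col (inord (p + k)); have := col (inord p).
  rewrite paired_col_lt // paired_col_mid ?addnK; last by lia.
  move=> /eqP; rewrite addrC subr_eq0 => /eqP->.
  by rewrite -mulr2n => /eqP; rewrite mulrn_eq0 => /eqP.
have c_2k : c 0 (inord k.*2) = 0 /\ c 0 (inord k.*2.+1) = 0.
  have := col (inord k.*2.+1); have := col (inord k.*2).
  rewrite paired_col_2k1 paired_col_2k (bigD1 (inord k.*2.+1)) /=; last first.
    by rewrite inordK; lia.
  rewrite big1 ?addr0 => [|i /andP[i_gt]]; first by lia.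
  by rewrite eq_inord; [move=> i_neq; apply: c_gt; lia | lia].
have c_inord p : (p < N)%N -> c 0 (inord p) = 0.
  move=> p_lt; case: (ltnP p k) => [/c_pair[]//|p_ge].
  case: (ltnP p k.*2) => [p_lt2|p_ge2].
    by have [_] := c_pair (p - k)%N (ltac:(lia)); rewrite subnK.
  have [->|p_neq] := eqVneq p k.*2; first by case: c_2k.
  have [->|p_neq1] := eqVneq p k.*2.+1; first by case: c_2k.
  by apply: c_gt; rewrite inordK; lia.
by apply/rowP => j; rewrite mxE -(inord_val j) c_inord.
Qed.


Definition pair_sum (y : 'rV['F_2]_N) : 'rV['F_2]_k :=
  \row_(l < k) (y 0 (inord l) + y 0 (inord (l + k))).

Lemma pair_sum_onto z : exists2 y, (y <= even_space N)%MS & pair_sum y = z.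
Proof.
pose y0 : 'rV['F_2]_N := \row_i (if insub (val i) is Some l then z 0 l else 0).
pose y := y0 + (\sum_j y0 0 j) *: delta_mx 0 (inord k.*2); exists y.
  have delta_sum : \sum_j (delta_mx 0 (inord k.*2) : 'rV['F_2]_N) 0 j = 1.
    rewrite (bigD1 (inord k.*2)) //= big1 => [|j /negbTE jk].
      by rewrite mxE !eqxx addr0.
    by rewrite mxE jk.
  rewrite even_spaceE /y; under eq_bigr do rewrite mxE [X in _ + X]mxE.
  by rewrite big_split /= -big_distrr /= delta_sum mulr1 addrr_pchar2 ?pchar_Fp.
apply/rowP => l; have l_lt := ltn_ord l; rewrite !mxE !eq_inord; try lia.
rewrite /= !inordK; try lia.
have [-> ->] : (nat_of_ord l == k.*2) = false /\ ((l + k)%N == k.*2) = false.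
  by split; apply/eqP; lia.
by rewrite valK insubN -?leqNgt ?leq_addl // !mulr0 !addr0.
Qed.

Lemma pair_sum_ker y : (y <= even_space N)%MS ->
  pair_sum y = 0 <-> (y <= map_mx mod2 paired_root_mx)%MS.
Proof.
move=> yE; split=> [/rowP y_pairs | /submxP[c ->]]; last first.
  apply/rowP => l; have l_lt := ltn_ord l.
  rewrite [LHS]mxE [RHS]mxE paired_col_lt // paired_col_mid; last by lia.
  by rewrite addnK oppF2 [c 0 (inord (l + k)) + _]addrC addrr_pchar2 ?pchar_Fp.
pose c : 'rV['F_2]_N :=
  \row_i (if (i < k)%N || (nat_of_ord i == k.*2) then 0 else y 0 i).
have c0 p : (p < k)%N || (p == k.*2) -> c 0 (inord p) = 0.
  by move=> p_out; rewrite mxE inordK ?p_out //; move: p_out; lia.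
have cy p : (p < N)%N -> (k <= p)%N -> p != k.*2 ->
    c 0 (inord p) = y 0 (inord p).
  by move=> p_lt p_ge p_neq; rewrite mxE inordK // ifF //; lia.
have cR_E : (c *m map_mx mod2 paired_root_mx <= even_space N)%MS.
  exact: submx_trans (submxMl _ _) (mod2_root_rows_sub paired_root_rows).
suff -> : y = c *m map_mx mod2 paired_root_mx by rewrite submxMl.
apply/eqP; rewrite -subr_eq0; apply/eqP.
apply: (even_space_single_eq0 (j0 := inord k.*2)).
  by rewrite addmx_sub // eqmx_opp.
case=> p p_lt; rewrite eq_inord /=; last by lia.
have -> : Ordinal p_lt = inord p by apply/val_inj; rewrite /= inordK.
move=> p_neq; apply/eqP; rewrite mxE [X in _ + X]mxE subr_eq0; apply/eqP.
case: (ltnP p k) => [p_ltk | p_gek].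
  rewrite paired_col_lt // c0 ?p_ltk // cy; try lia.
  have := y_pairs (Ordinal p_ltk); rewrite !mxE /= oppr0 add0r => /eqP.
  by rewrite addr_eq0 oppF2 => /eqP.
case: (ltnP p k.*2) => [p_lt2k | p_ge2k].
  by rewrite paired_col_mid ?p_gek // cy ?c0 ?addr0 //; lia.
have [-> | p_neq1] := eqVneq p k.*2.+1.
  by rewrite paired_col_2k1 cy ?c0 ?eqxx ?orbT ?addr0 //; lia.
by rewrite paired_col_gt ?cy ?inordK //; lia.
Qed.

Lemma paired_root_quotient : quotient_iso paired_root_mx (elem2 k).
Proof.
apply: (quotient_iso_mod2 paired_root_rows
          (lin_indep_det paired_root_mx_indep) (psi := pair_sum)).
- by move=> y z; apply/rowP => l; rewrite !mxE addrACA.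
- exact: pair_sum_onto.
- exact: pair_sum_ker.
Qed.

End PairedRoots.

Theorem mainTheorem6 (n : nat) (hn : (2 <= n)%N) :
  (forall M : 'M[int]_n,
     (forall i, minimal_vec (row i M)) -> lin_indep M ->
     exists2 k : nat, (k <= (n - 2)./2)%N & quotient_iso M (elem2 k)) /\
  (forall k : nat, (k <= (n - 2)./2)%N ->
     exists M : 'M[int]_n,
       [/\ forall i, minimal_vec (row i M), lin_indep M & quotient_iso M (elem2 k)]).
Proof.
split=> [M M_min M_indep | k k_le].
  have M_roots : root_rows M by move=> l; apply: minimal_vec_root.
  have M_det := lin_indep_det M_indep.
  exists (\rank (even_space n :\: map_mx mod2 M)).
    exact: rank_even_diff_le.
  exact: root_rows_quotient.
case: n hn k_le => [//|m] hn k_le.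
have k_small : (k.*2.+2 <= m.+1)%N by move: k_le; rewrite geq_half_double; lia.
exists (paired_root_mx m k); split.
- by move=> i; apply: root_vec_minimal (paired_root_mx_row k_small i).
- exact: paired_root_mx_indep.
- exact: paired_root_quotient.
Qed.
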